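(* Let $G:\mathbb{R}^k\to\mathbb{R}^n$ and $G^\dagger:\mathbb{R}^n\to\mathbb{R}^k$ be maps such that $G\circ G^\dagger$ is a $\delta$-approximate projector for some $\delta\ge 0$, and let $A\in\mathbb{R}^{m\times n}$ satisfy $REC(R(G),\alpha,\beta)$ with $0<\alpha<\beta$. Fix $x^*\in R(G)$, $y=Ax^*$, $f(x)=\|Ax-y\|_2^2$. For any $x_t\in R(G)$, define $w_t=x_t-\frac{1}{\beta}A^T(Ax_t-y)$ and $x_{t+1}=G(G^\dagger(w_t))$. Then $$f(x_{t+1})\le\Big(\frac{\beta}{\alpha}-1\Big)f(x_t)+\beta\delta.$$
   Context: $R(G)=\{G(z):z\in\mathbb{R}^k\}$ denotes the range of $G$. Restricted Eigenvalue Constraint: for $S\subset\mathbb{R}^n$ and $0<\alpha<\beta$, a matrix $A\in\mathbb{R}^{m\times n}$ satisfies $REC(S,\alpha,\beta)$ if $\alpha\|x_1-x_2\|^2\le\|A(x_1-x_2)\|^2\le\beta\|x_1-x_2\|^2$ for all $x_1,x_2\in S$. $\delta$-approximate projector: the composite map $G\circ G^\dagger:\mathbb{R}^n\to R(G)$ is a $\delta$-approximate projector if for all $x\in\mathbb{R}^n$, $\|x-G(G^\dagger(x))\|^2\le \inf_{z\in\mathbb{R}^k}\|x-G(z)\|^2+\delta$. All norms are Euclidean. *)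

(* vectors in R^n are column vectors 'cV[R]_n over an
   arbitrary real field R (covers the reals). *)
From HB Require Import structures.
From mathcomp Require Import all_boot all_order all_algebra.
Set Implicit Arguments. Unset Strict Implicit. Unset Printing Implicit Defensive.
Import Order.TTheory GRing.Theory Num.Theory.
Local Open Scope ring_scope.

Definition sqnorm (R : realFieldType) (n : nat) (v : 'cV[R]_n) : R :=
  \sum_(i < n) (v i 0) ^+ 2.

Definition in_range (R : realFieldType) (k n : nat)
  (G : 'cV[R]_k -> 'cV[R]_n) (x : 'cV[R]_n) : Prop :=
  exists z, x = G z.

Definition REC (R : realFieldType) (m n : nat) (S : 'cV[R]_n -> Prop)
  (alpha beta : R) (A : 'M[R]_(m, n)) : Prop :=
  0 < alpha /\ alpha < beta /\
  forall x1 x2, S x1 -> S x2 ->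
    alpha * sqnorm (x1 - x2) <= sqnorm (A *m (x1 - x2)) /\
    sqnorm (A *m (x1 - x2)) <= beta * sqnorm (x1 - x2).

(* G o Gdag is a delta-approximate projector:
   ||x - G(Gdag x)||^2 <= inf_z ||x - G z||^2 + delta, written out as
   "for every z" (equivalent to the infimum formulation). *)
Definition approx_projector (R : realFieldType) (k n : nat)
  (G : 'cV[R]_k -> 'cV[R]_n) (Gdag : 'cV[R]_n -> 'cV[R]_k) (delta : R) : Prop :=
  forall x z, sqnorm (x - G (Gdag x)) <= sqnorm (x - G z) + delta.

(* Write d = x_t - xstar, e = x_{t+1} - x_t and g = A^T A d, so that the gradient
   step is w_t = x_t - g/beta and f(x) = ||A (x - xstar)||^2.
   1. An inner product on column vectors, with its bilinearity, symmetry and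
      adjoint rule, gives expansions of squared norms of sums.
   2. Comparing the approximate projection x_{t+1} of w_t with the competitor
      xstar (which lies in the range of G) and expanding both sides yields
        beta ||e||^2 + 2 <Ad, Ae> <= beta ||d||^2 - 2 ||Ad||^2 + beta delta.
   3. Expanding f(x_{t+1}) = ||Ad + Ae||^2 and using the upper REC bound on e
      and the lower REC bound on d turns this into
        f(x_{t+1}) <= (beta/alpha - 1) f(x_t) + beta delta. *)
From HB Require Import structures.
From mathcomp Require Import all_boot all_order all_algebra.
From mathcomp Require Import ring lra.
Import Order.TTheory GRing.Theory Num.Theory.
Set Implicit Arguments. Unset Strict Implicit.
Local Open Scope ring_scope.

Section InnerProduct.
Variable R : realFieldType.

Definition dotp (n : nat) (u v : 'cV[R]_n) : R := (u^T *m v) 0 0.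

Lemma sqnorm_dot n (v : 'cV[R]_n) : sqnorm v = dotp v v.
Proof. by rewrite /sqnorm /dotp mxE; apply: eq_bigr => i _; rewrite mxE expr2. Qed.

Lemma dotpC n (u v : 'cV[R]_n) : dotp u v = dotp v u.
Proof.
rewrite /dotp; transitivity ((u^T *m v)^T 0 0); first by rewrite [in RHS]mxE.
by rewrite trmx_mul trmxK.
Qed.

Lemma dotpDl n (u v w : 'cV[R]_n) : dotp (u + v) w = dotp u w + dotp v w.
Proof. by rewrite /dotp linearD mulmxDl mxE. Qed.

Lemma dotpNl n (u w : 'cV[R]_n) : dotp (- u) w = - dotp u w.
Proof. by rewrite /dotp linearN mulNmx mxE. Qed.

Lemma dotpZl n a (u w : 'cV[R]_n) : dotp (a *: u) w = a * dotp u w.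
Proof. by rewrite /dotp linearZ -scalemxAl mxE. Qed.

Lemma dotpDr n (u v w : 'cV[R]_n) : dotp w (u + v) = dotp w u + dotp w v.
Proof. by rewrite dotpC dotpDl !(dotpC w). Qed.

Lemma dotpNr n (u w : 'cV[R]_n) : dotp w (- u) = - dotp w u.
Proof. by rewrite dotpC dotpNl dotpC. Qed.

Lemma dotpZr n a (u w : 'cV[R]_n) : dotp w (a *: u) = a * dotp w u.
Proof. by rewrite dotpC dotpZl dotpC. Qed.

Lemma dotp_tr m n (A : 'M[R]_(m, n)) u v : dotp (A *m u) v = dotp u (A^T *m v).
Proof. by rewrite /dotp trmx_mul mulmxA. Qed.

Lemma sqnormD n (u v : 'cV[R]_n) :
  sqnorm (u + v) = sqnorm u + 2 * dotp u v + sqnorm v.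
Proof. by rewrite !sqnorm_dot dotpDl !dotpDr (dotpC v u); ring. Qed.

Lemma sqnormBZ n (u v : 'cV[R]_n) c :
  sqnorm (u - c *: v) = sqnorm u - 2 * c * dotp u v + c ^+ 2 * sqnorm v.
Proof.
rewrite !sqnorm_dot dotpDl !dotpDr !dotpNl !dotpNr !dotpZl !dotpZr (dotpC v u).
ring.
Qed.

Lemma sqnormN n (u : 'cV[R]_n) : sqnorm (- u) = sqnorm u.
Proof. by rewrite !sqnorm_dot dotpNl dotpNr opprK. Qed.

End InnerProduct.

Section GradientStep.
Variables (R : realFieldType) (m n : nat) (A : 'M[R]_(m, n)).
Variables (beta delta : R) (x xstar x1 : 'cV[R]_n).
Hypothesis beta_gt0 : 0 < beta.

Let w := x - beta^-1 *: (A^T *m (A *m (x - xstar))).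

Lemma projection_step_bound :
  sqnorm (w - x1) <= sqnorm (w - xstar) + delta ->
  beta * sqnorm (x1 - x) + 2 * dotp (A *m (x - xstar)) (A *m (x1 - x))
    <= beta * sqnorm (x - xstar) - 2 * sqnorm (A *m (x - xstar)) + beta * delta.
Proof.
set d := x - xstar; set e := x1 - x; set g := A^T *m (A *m d).
have w_x1 : w - x1 = - e - beta^-1 *: g by rewrite /w addrAC /e opprB.
have w_xstar : w - xstar = d - beta^-1 *: g by rewrite /w addrAC.
have dg : dotp d g = sqnorm (A *m d) by rewrite /g -dotp_tr sqnorm_dot.
have eg : dotp (- e) g = - dotp (A *m d) (A *m e)
  by rewrite dotpNl /g -dotp_tr dotpC.
rewrite w_x1 w_xstar !sqnormBZ sqnormN dg eg => /(ler_wpM2l (ltW beta_gt0)).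
have beta_neq0 : beta != 0 by rewrite gt_eqF.
set P := dotp _ _; set F := sqnorm (A *m d); set Q := sqnorm g.
have -> : beta * (sqnorm e - 2 * beta^-1 * - P + beta^-1 ^+ 2 * Q)
  = beta * sqnorm e + 2 * P + beta^-1 * Q by field.
have -> : beta * (sqnorm d - 2 * beta^-1 * F + beta^-1 ^+ 2 * Q + delta)
  = beta * sqnorm d - 2 * F + beta^-1 * Q + beta * delta by field.
lra.
Qed.

Lemma gradient_step_descent (alpha : R) :
  0 < alpha ->
  sqnorm (w - x1) <= sqnorm (w - xstar) + delta ->
  sqnorm (A *m (x1 - x)) <= beta * sqnorm (x1 - x) ->
  alpha * sqnorm (x - xstar) <= sqnorm (A *m (x - xstar)) ->
  sqnorm (A *m (x1 - xstar))
    <= (beta / alpha - 1) * sqnorm (A *m (x - xstar)) + beta * delta.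
Proof.
move=> alpha_gt0 /projection_step_bound step upperREC lowerREC.
have -> : x1 - xstar = (x - xstar) + (x1 - x) by rewrite [RHS]addrC addrA subrK.
rewrite mulmxDr sqnormD.
have := ler_wpM2l (divr_ge0 (ltW beta_gt0) (ltW alpha_gt0)) lowerREC.
have -> : beta / alpha * (alpha * sqnorm (x - xstar)) = beta * sqnorm (x - xstar)
  by field; rewrite gt_eqF.
have -> : (beta / alpha - 1) * sqnorm (A *m (x - xstar))
  = beta / alpha * sqnorm (A *m (x - xstar)) - sqnorm (A *m (x - xstar)) by ring.
lra.
Qed.

End GradientStep.

Theorem mainTheorem2 (R : realFieldType) (k n m : nat)
  (G : 'cV[R]_k -> 'cV[R]_n) (Gdag : 'cV[R]_n -> 'cV[R]_k) (delta : R)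
  (alpha beta : R) (A : 'M[R]_(m, n)) (xstar xt : 'cV[R]_n) :
  0 <= delta ->
  approx_projector G Gdag delta ->
  REC (in_range G) alpha beta A ->
  in_range G xstar ->
  in_range G xt ->
  let y := A *m xstar in
  let f := fun x : 'cV[R]_n => sqnorm (A *m x - y) in
  let wt := xt - beta^-1 *: (A^T *m (A *m xt - y)) in
  let xt1 := G (Gdag wt) in
  f xt1 <= (beta / alpha - 1) * f xt + beta * delta.
Proof.
move=> _ proj [alpha_gt0 [alpha_lt_beta rec]] xstar_range xt_range /=.
have beta_gt0 : 0 < beta by apply: lt_trans alpha_lt_beta.
have [zs xstarE] := xstar_range.
set wt := xt - _ *: _; set xt1 := G (Gdag wt).
have xt1_range : in_range G xt1 by exists (Gdag wt).
have [_ upperREC] := rec _ _ xt1_range xt_range.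
have [lowerREC _] := rec _ _ xt_range xstar_range.
have proj_wt : sqnorm (wt - xt1) <= sqnorm (wt - xstar) + delta
  by rewrite xstarE; apply: proj.
rewrite /wt -mulmxBr in proj_wt.
rewrite -!mulmxBr; exact: gradient_step_descent proj_wt upperREC lowerREC.
Qed.
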